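(* Let $1\le k<n$. There exist real numbers $\lambda_0,\dots,\lambda_k$ depending only on $n$ and $k$ with the following property. Let $X_1,\dots,X_n$ be sets, $X=\prod_iX_i$, and let $F:X\to\mathbb{R}$ be a finite $(n,k)$-function. Fix $y\in X$ and for each $\beta\subseteq\{1,\dots,n\}$ define $F_\beta:X_\beta\to\mathbb{R}$ by $F_\beta(x_\beta)=F(x_\beta y_{\{1,\dots,n\}\setminus\beta})$ (so $F_\varnothing$ is the constant $F(y)$). For $\alpha\in\mathcal{I}_{nk}$ put $\widehat f_\alpha(x_\alpha)=\sum_{\beta\subseteq\alpha}\lambda_{|\beta|}F_\beta(x_\beta)$. Then $F(x)=\sum_{\alpha\in\mathcal{I}_{nk}}\widehat f_\alpha(x_\alpha)$ for every $x\in X$.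
   Context: $\mathcal{I}_{nk}$ is the family of $k$-element subsets of $\{1,\dots,n\}$; $X_\alpha=\prod_{i\in\alpha}X_i$; $x_\alpha$ is the projection of $x$ onto $X_\alpha$; for disjoint $\alpha,\beta$, $x_\alpha y_\beta$ denotes the point of $X_{\alpha\sqcup\beta}$ with coordinates from $x_\alpha$ and $y_\beta$. A function $F:X\to[-\infty,+\infty)$ is an $(n,k)$-function if $F(x)=\sum_{\alpha\in\mathcal{I}_{nk}}f_\alpha(x_\alpha)$ for all $x$ for some functions $f_\alpha:X_\alpha\to[-\infty,+\infty)$ (no regularity assumed); it is a finite $(n,k)$-function if moreover $F(x)>-\infty$ for all $x$ (equivalently all $f_\alpha$ are real-valued). *)

From Stdlib Require Import Reals.
From HB Require Import structures.
From mathcomp Require Import all_boot all_order all_algebra.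
From mathcomp Require Import Rstruct.
Set Implicit Arguments. Unset Strict Implicit. Unset Printing Implicit Defensive.
Import GRing.Theory.
Local Open Scope ring_scope.

(* Points of X = prod_{i<n} X_i are dependent functions x : forall i, X i.
   A function on X_alpha is represented as a function on X that depends only
   on the coordinates in alpha. *)
Definition depends_only_on (n : nat) (X : 'I_n -> Type) (alpha : {set 'I_n})
  (g : (forall i, X i) -> R) : Prop :=
  forall x x' : forall i, X i, (forall i, i \in alpha -> x i = x' i) -> g x = g x'.

Definition is_finite_nk_function (n k : nat) (X : 'I_n -> Type)
  (F : (forall i, X i) -> R) : Prop :=
  exists f : {set 'I_n} -> (forall i, X i) -> R,
    (forall alpha : {set 'I_n}, #|alpha| = k -> depends_only_on alpha (f alpha)) /\
    (forall x, F x = \sum_(alpha : {set 'I_n} | #|alpha| == k) f alpha x).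

Definition mixpt (n : nat) (X : 'I_n -> Type) (beta : {set 'I_n})
  (x y : forall i, X i) : forall i, X i :=
  fun i => if i \in beta then x i else y i.

From Stdlib Require Import Reals.
From HB Require Import structures.
From mathcomp Require Import all_boot all_order all_algebra.
From mathcomp Require Import Rstruct.
From mathcomp Require Import zify.
Import GRing.Theory Num.Theory.
Set Implicit Arguments. Unset Strict Implicit.
Local Open Scope ring_scope.

(* Both sides are linear in F, so it suffices to treat one summand f_g with
   #|g| = k; it depends only on the coordinates in g, hence
   f_g(x_b y_{~b}) = h (b :&: g) with h d := f_g(x_d y_{~d}).  Exchanging the
   sums, a set b is counted once for each of its C(n-|b|, k-|b|) supersets a
   of size k; grouping the b by d = b :&: g and writing b = d :|: E with
   E \subset ~: g, the coefficient of h d becomes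
   \sum_e C(n-k, e) W(|d|+e), where W j = C(n-j, k-j) lam j.  We choose lam
   so that this coefficient is [|d| == k]: putting W (k-i) = u i, this is the
   convolution identity \sum_(e <= i) C(n-k, e) u (i-e) = [i == 0], solvable
   recursively because C(n-k, 0) = 1.  Among d \subset g only d = g has
   |d| = k, which leaves h g = f_g(x). *)

Lemma convolution_inverse (R : pzRingType) (c : nat -> R) (N : nat) :
  c 0%N = 1 ->
  exists u : nat -> R, forall i, (i <= N)%N ->
    \sum_(0 <= e < i.+1) c e * u (i - e)%N = (i == 0%N)%:R.
Proof.
move=> c0; elim: N => [|N [u uP]].
  exists (fun _ => 1) => i; rewrite leqn0 => /eqP ->.
  by rewrite big_nat1 c0 mulr1.
pose s := \sum_(1 <= e < N.+2) c e * u (N.+1 - e)%N.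
exists (fun j => if j == N.+1 then - s else u j) => i.
rewrite leq_eqVlt ltnS => /orP[/eqP -> | i_le_N].
  rewrite big_ltn // subn0 eqxx c0 mul1r.
  rewrite [X in _ + X](_ : _ = s) ?addNr //.
  by apply: eq_big_nat => e /andP[e_gt0 _]; rewrite ifN //; lia.
rewrite -uP //; apply: eq_big_nat => e /andP[_ e_le_i].
by rewrite ifN //; lia.
Qed.

Section SubsetSums.
Variable T : finType.

Lemma sum_subsets_by_card (R : pzRingType) (S : {set T}) (G : nat -> R) :
  \sum_(E : {set T} | E \subset S) G #|E| =
  \sum_(0 <= e < #|S|.+1) 'C(#|S|, e)%:R * G e.
Proof.
have card_le (E : {set T}) : E \subset S -> (#|E| < #|S|.+1)%N.
  by move=> sES; rewrite ltnS subset_leq_card.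
rewrite big_mkord (partition_big (fun E : {set T} => inord #|E| : 'I_#|S|.+1) xpredT) //=.
apply: eq_bigr => e _.
rewrite (eq_bigr (fun _ => G e)); last first.
  by move=> E /andP[sES /eqP <-]; rewrite inordK ?card_le.
rewrite sumr_const -cards_draws mulr_natl; congr (_ *+ _).
apply: eq_card => E; rewrite !inE; apply/andP/andP => -[sES /eqP cardE].
  by split=> //; rewrite -cardE inordK ?card_le.
by split=> //; apply/eqP/val_inj; rewrite /= inordK ?cardE ?card_le.
Qed.

Lemma sum_by_trace (V : nmodType) (g d : {set T}) (G : {set T} -> V) :
  d \subset g ->
  \sum_(b : {set T} | b :&: g == d) G b =
  \sum_(E : {set T} | E \subset ~: g) G (d :|: E).
Proof.
move=> /subsetP s_dg.
rewrite (reindex_onto (fun E => d :|: E) (fun b => b :&: ~: g)); last first.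
  move=> b /eqP <-; apply/setP => i; rewrite !inE.
  by case: (i \in b); case: (i \in g).
apply: eq_bigl => E; apply/andP/idP => [[_ /eqP <-]|/subsetP s_Eg].
  exact: subsetIr.
split; apply/eqP/setP => i; rewrite !inE; move: (s_dg i) (s_Eg i); rewrite !inE;
  case: (i \in d); case: (i \in E); case: (i \in g) => //= h1 h2;
  by [move: (h1 isT) | move: (h2 isT)].
Qed.

Lemma card_trace_union (g d E : {set T}) :
  d \subset g -> E \subset ~: g -> #|d :|: E| = (#|d| + #|E|)%N.
Proof.
move=> s_dg s_Eg; rewrite -cardsUI.
suff -> : d :&: E = set0 by rewrite cards0 addn0.
by apply/eqP; rewrite -subset0 -(setICr g) setISS.
Qed.

Lemma card_setC (g : {set T}) : #|~: g| = (#|T| - #|g|)%N.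
Proof. by rewrite -(cardsC g) addKn. Qed.

Lemma count_supersets (R : pzRingType) (k : nat) (b : {set T}) :
  (k <= #|T|)%N ->
  \sum_(a : {set T} | (#|a| == k) && (b \subset a)) (1 : R) =
  if (#|b| <= k)%N then 'C(#|T| - #|b|, k - #|b|)%:R else 0.
Proof.
move=> k_le_T.
transitivity (\sum_(a : {set T} | a :&: b == b) ((#|a| == k)%:R : R)).
  rewrite big_mkcond [RHS]big_mkcond; apply: eq_bigr => a _.
  rewrite (_ : (a :&: b == b) = (b \subset a)); last exact/eqP/setIidPr.
  by case: (#|a| == k); case: (b \subset a).
rewrite sum_by_trace //.
under eq_bigr => E s_Eb do rewrite (card_trace_union (subxx b) s_Eb).
rewrite (sum_subsets_by_card (~: b) (fun e => ((#|b| + e == k)%N%:R : R))) card_setC.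
have card_eq e : (#|b| + e == k) = (#|b| <= k)%N && (e == k - #|b|)%N by lia.
under eq_bigr => e _ do rewrite card_eq.
have [b_le_k|k_lt_b] := leqP #|b| k; last first.
  by rewrite big1 // => e _; rewrite mulr0.
under eq_bigr => e _ do rewrite mulr_natr mulrb.
by rewrite -big_mkcond big_nat1_eq ifT //; lia.
Qed.

End SubsetSums.

(* The total weight with which a set of size j occurs in the double sum
   \sum_(#|a| = k) \sum_(b \subset a) lam #|b| over an n-element type. *)
Definition superset_weight (R : pzRingType) (n k : nat) (lam : nat -> R)
    (j : nat) : R :=
  (if (j <= k)%N then 'C(n - j, k - j)%:R else 0) * lam j.

(* The condition on lam making the coefficient of h d in the reconstruction
   (see reconstruct_from_traces) equal to [#|d| == k]. *)
Definition reconstructing_weights (R : pzRingType) (n k : nat)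
    (lam : nat -> R) : Prop :=
  forall d, (d <= k)%N ->
    \sum_(0 <= e < (n - k).+1) 'C(n - k, e)%:R * superset_weight n k lam (d + e)
    = (d == k)%:R.

Section Reconstruction.
Variables (R : pzRingType) (T : finType) (k : nat) (lam : nat -> R).

(* Exchanging the two sums: b is counted once per k-superset a. *)
Lemma sum_over_supersets (H : {set T} -> R) : (k <= #|T|)%N ->
  \sum_(a : {set T} | #|a| == k) \sum_(b : {set T} | b \subset a) lam #|b| * H b
  = \sum_(b : {set T}) superset_weight #|T| k lam #|b| * H b.
Proof.
move=> k_le_T; rewrite (exchange_big_dep xpredT) //=; apply: eq_bigr => b _.
rewrite (eq_bigr (fun _ => 1 * (lam #|b| * H b))) => [|a _]; last by rewrite mul1r.
by rewrite -big_distrl /= count_supersets // mulrA.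
Qed.

Lemma sum_by_traces (g : {set T}) (h : {set T} -> R) :
  \sum_(b : {set T}) superset_weight #|T| k lam #|b| * h (b :&: g)
  = \sum_(d : {set T} | d \subset g)
      (\sum_(0 <= e < #|~: g|.+1)
         'C(#|~: g|, e)%:R * superset_weight #|T| k lam (#|d| + e)) * h d.
Proof.
rewrite (partition_big (fun b : {set T} => b :&: g) (fun d : {set T} => d \subset g)) /=; last first.
  by move=> b _; apply: subsetIr.
apply: eq_bigr => d s_dg.
rewrite (eq_bigr (fun b : {set T} => superset_weight #|T| k lam #|b| * h d)); last first.
  by move=> b /eqP ->.
rewrite -big_distrl /= sum_by_trace //; congr (_ * _).
rewrite -(sum_subsets_by_card (~: g) (fun e => superset_weight #|T| k lam (#|d| + e))).
by apply: eq_bigr => E s_Eg; rewrite (card_trace_union s_dg s_Eg).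
Qed.

Lemma reconstruct_from_traces (g : {set T}) (h : {set T} -> R) :
  #|g| = k -> reconstructing_weights #|T| k lam ->
  \sum_(a : {set T} | #|a| == k)
     \sum_(b : {set T} | b \subset a) lam #|b| * h (b :&: g) = h g.
Proof.
move=> card_g lamP.
rewrite sum_over_supersets ?sum_by_traces ?card_setC ?card_g; last first.
  by rewrite -card_g max_card.
rewrite (bigD1 g) //= card_g lamP // eqxx mul1r [X in _ + X]big1 ?addr0 //.
move=> d /andP[s_dg d_neq_g].
have d_lt_k : (#|d| < k)%N by rewrite -card_g proper_card // properEneq d_neq_g.
by rewrite lamP ?ltn_eqF ?mul0r // ltnW.
Qed.

End Reconstruction.

(* Over a field of characteristic zero reconstructing weights exist: choose
   lam so that superset_weight j = u (k - j), where u is the convolution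
   inverse of the binomial row C(n-k, .). *)
Lemma reconstructing_weights_exist (F : numFieldType) (n k : nat) :
  (k <= n)%N -> exists lam : nat -> F, reconstructing_weights n k lam.
Proof.
move=> k_le_n; set m := (n - k)%N.
have C0 : 'C(m, 0)%:R = 1 :> F by rewrite bin0.
have [u uP] := @convolution_inverse F (fun e => 'C(m, e)%:R : F) k C0.
pose lam j := if (j <= k)%N then u (k - j)%N / 'C(n - j, k - j)%:R else 0.
have weightE j : superset_weight n k lam j = if (j <= k)%N then u (k - j)%N else 0.
  rewrite /superset_weight /lam; case: ifP => j_le_k; last by rewrite mul0r.
  have C_neq0 : ('C(n - j, k - j)%:R : F) != 0.
    by rewrite pnatr_eq0 -lt0n bin_gt0; lia.
  by rewrite mulrC -mulrA mulVf ?mulr1.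
exists lam => d d_le_k; set i := (k - d)%N.
have -> : (d == k) = (i == 0%N) by rewrite /i; lia.
rewrite -uP ?leq_subr //.
rewrite (@big_nat_widen _ _ _ 0 m.+1 (m + i).+1) ?ltnS ?leq_addr //.
rewrite [RHS](@big_nat_widen _ _ _ 0 i.+1 (m + i).+1) ?ltnS ?leq_addl //.
rewrite big_mkcond [RHS]big_mkcond; apply: eq_big_nat => e _; rewrite weightE.
case: (ltnP e m.+1) => e_m; case: (ltnP e i.+1) => e_i /=.
- by rewrite ifT; [congr (_ * u _) | ]; rewrite /i; lia.
- by rewrite ifF ?mulr0 //; rewrite /i in e_i; lia.
- by rewrite bin_small ?mul0r.
- by [].
Qed.

Lemma mixpt_trace (n : nat) (X : 'I_n -> Type) (g b : {set 'I_n})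
    (f : (forall i, X i) -> R) (x y : forall i, X i) :
  depends_only_on g f -> f (mixpt b x y) = f (mixpt (b :&: g) x y).
Proof. by move=> f_dep; apply: f_dep => i i_g; rewrite /mixpt inE i_g andbT. Qed.

Lemma mixpt_full (n : nat) (X : 'I_n -> Type) (g : {set 'I_n})
    (f : (forall i, X i) -> R) (x y : forall i, X i) :
  depends_only_on g f -> f (mixpt g x y) = f x.
Proof. by move=> f_dep; apply: f_dep => i i_g; rewrite /mixpt i_g. Qed.

Lemma reconstruct_summand (n k : nat) (X : 'I_n -> Type) (lam : nat -> R)
    (g : {set 'I_n}) (f : (forall i, X i) -> R) :
  #|g| = k -> reconstructing_weights n k lam -> depends_only_on g f ->
  forall y x : forall i, X i,
    \sum_(a : {set 'I_n} | #|a| == k)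
       \sum_(b : {set 'I_n} | b \subset a) lam #|b| * f (mixpt b x y) = f x.
Proof.
move=> card_g lamP f_dep y x.
have lamP' : reconstructing_weights #|'I_n| k lam by rewrite card_ord.
rewrite -[RHS](mixpt_full x y f_dep).
rewrite -(reconstruct_from_traces (fun d => f (mixpt d x y)) card_g lamP').
by apply: eq_bigr => a _; apply: eq_bigr => b _; rewrite (mixpt_trace b x y f_dep).
Qed.

(* Main theorem: by linearity in F, reduce to the summands of F. *)
Theorem mainTheorem8 (n k : nat) :
  (1 <= k < n)%N ->
  exists lam : nat -> R,
    forall (X : 'I_n -> Type) (F : (forall i, X i) -> R),
      is_finite_nk_function k F ->
      forall y x : forall i, X i,
        F x = \sum_(alpha : {set 'I_n} | #|alpha| == k)
                \sum_(beta : {set 'I_n} | beta \subset alpha)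
                   lam #|beta| * F (mixpt beta x y).
Proof.
move=> /andP[_ k_lt_n].
have [lam lamP] := reconstructing_weights_exist R (ltnW k_lt_n).
exists lam => X F [f [f_dep F_sum]] y x.
rewrite F_sum; symmetry.
under eq_bigr => a _ do under eq_bigr => b _ do rewrite F_sum mulr_sumr.
under eq_bigr => a _ do rewrite exchange_big.
rewrite exchange_big /=; apply: eq_bigr => g /eqP card_g.
exact: reconstruct_summand card_g lamP (f_dep g card_g) y x.
Qed.
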